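(* Consider the sequences generated by Algorithm 2 (described in the context) and let $B=\{k\ge1:\lambda_k\|y_k-x_{k-1}\|<\eta\}$. Then for all $k\in B$, $$\nu_k\in N_C(y_k)\quad\text{and}\quad\|F(y_k)+\nu_k\|\le\frac{2\hat\theta/L+\eta}{\lambda_k^2}.$$
   Context: Setting: $\mathcal H$ real Hilbert space; $C\subseteq\mathcal H$ nonempty closed convex; $N_C(x)=\{\nu:\langle\nu,y-x\rangle\le0\ \forall y\in C\}$ if $x\in C$, $N_C(x)=\emptyset$ otherwise. $F:C\to\mathcal H$ is monotone, continuously differentiable, and $\|F'(x)-F'(y)\|\le L\|x-y\|$ for all $x,y\in C$, with $L>0$; the set of $x$ with $0\in F(x)+N_C(x)$ is nonempty. For $y\in C$, $F_y(x):=F(y)+F'(y)(x-y)$. Parameters: $0\le\hat\sigma<1/2$; $0<\theta<(1-\hat\sigma)(1-2\hat\sigma)$; $\hat\theta:=\theta\big(\frac{\hat\sigma}{1-\hat\sigma}+\frac{\theta}{(1-\hat\sigma)^2}\big)$; $\eta>2\hat\theta/L$; $\tau:=\dfrac{2(\theta-\hat\theta)}{2\theta+\frac{\eta L}{2}+\sqrt{(2\theta+\frac{\eta L}{2})^2-4\theta(\theta-\hat\theta)}}$. Algorithm 2: input $x_0\in C$, $y_0:=x_0$, $\nu_0:=0$, $\lambda_1>0$ with $\lambda_1^2\|F(y_0)\|\le2\theta/L$. For $k=1,2,\dots$: if $F(y_{k-1})+\nu_{k-1}=0$, stop and return $y_{k-1}$. If $\frac{\lambda_kL}{2}\|\lambda_k(F(y_{k-1})+\nu_{k-1})+y_{k-1}-x_{k-1}\|\le\hat\theta$,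 set $y_k=y_{k-1}$, $\nu_k=\nu_{k-1}$; otherwise find any $(y_k,\nu_k)$ with $\nu_k\in N_C(y_k)$ and $\|\lambda_k(F_{y_{k-1}}(y_k)+\nu_k)+y_k-x_{k-1}\|\le\hat\sigma\|y_k-y_{k-1}\|$. Then, if $\lambda_k\|y_k-x_{k-1}\|\ge\eta$, set $x_k=x_{k-1}-\tau\lambda_k(F(y_k)+\nu_k)$ and $\lambda_{k+1}=(1-\tau)\lambda_k$; else set $x_k=x_{k-1}$ and $\lambda_{k+1}=\lambda_k/(1-\tau)$. Standing assumption: the algorithm never stops at the first test, i.e. $F(y_{k-1})+\nu_{k-1}\neq0$ for all $k$. *)

From HB Require Import structures.
From mathcomp Require Import all_boot all_order all_algebra.
From mathcomp Require Import all_classical all_reals all_analysis.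
Set Implicit Arguments. Unset Strict Implicit. Unset Printing Implicit Defensive.
Import Order.TTheory GRing.Theory Num.Theory.
Import numFieldNormedType.Exports.
Local Open Scope classical_set_scope.
Local Open Scope ring_scope.

Section Defs.
Variables (R : realType) (V : normedModType R).

(* ip is a real inner product on V inducing the norm of V.  Together with
   completeness of V (completeNormedModType) this makes V a real Hilbert space. *)
Definition is_inner_product (ip : V -> V -> R) : Prop :=
  (forall x y, ip x y = ip y x) /\
  (forall a x y z, ip (a *: x + y) z = a * ip x z + ip y z) /\
  (forall x, ip x x = `|x| ^+ 2).

Definition is_convex_set (C : set V) : Prop :=
  forall x y (t : R), C x -> C y -> 0 <= t <= 1 -> C (t *: x + (1 - t) *: y).

Definition normal_cone (ip : V -> V -> R) (C : set V) (x nu : V) : Prop :=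
  C x /\ forall y, C y -> ip nu (y - x) <= 0.

Definition monotone_on (ip : V -> V -> R) (C : set V) (F : V -> V) : Prop :=
  forall x y, C x -> C y -> 0 <= ip (F x - F y) (x - y).

Definition bounded_linear_on (C : set V) (DF : V -> V -> V) : Prop :=
  forall y, C y ->
    (forall a u v, DF y (a *: u + v) = a *: DF y u + DF y v) /\
    (exists M : R, forall v, `|DF y v| <= M * `|v|).

Definition frechet_deriv_on (C : set V) (F : V -> V) (DF : V -> V -> V) : Prop :=
  forall y, C y -> forall eps : R, 0 < eps -> exists2 delta : R, 0 < delta &
    forall z, C z -> `|z - y| < delta ->
      `|F z - F y - DF y (z - y)| <= eps * `|z - y|.

Definition lipschitz_deriv_on (C : set V) (DF : V -> V -> V) (L : R) : Prop :=
  forall x y, C x -> C y -> forall v, `|DF x v - DF y v| <= L * `|x - y| * `|v|.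

Definition Flin (F : V -> V) (DF : V -> V -> V) (y x : V) : V := F y + DF y (x - y).

Definition theta_hat (sigma theta : R) : R :=
  theta * (sigma / (1 - sigma) + theta / (1 - sigma) ^+ 2).

Definition tau_of (sigma theta eta L : R) : R :=
  let th := theta_hat sigma theta in
  let a := 2 * theta + eta * L / 2 in
  2 * (theta - th) / (a + Num.sqrt (a ^+ 2 - 4 * theta * (theta - th))).

(* (x, y, nu, lam) is a run of Algorithm 2 that never stops.
   x, y, nu are indexed from 0, lam from 1 (lam 0 is unused). *)
Definition algorithm2 (ip : V -> V -> R) (C : set V) (F : V -> V) (DF : V -> V -> V)
  (L sigma theta eta : R) (x y nu : nat -> V) (lam : nat -> R) : Prop :=
  let th := theta_hat sigma theta in
  let tau := tau_of sigma theta eta L in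
  C (x 0%N) /\ y 0%N = x 0%N /\ nu 0%N = 0 /\
      0 < lam 1%N /\ lam 1%N ^+ 2 * `|F (y 0%N)| <= 2 * theta / L /\
      (* standing assumption: never stops at the first test *)
      (forall k, F (y k) + nu k != 0) /\
      forall k : nat,
        (if lam k.+1 * L / 2 * `|lam k.+1 *: (F (y k) + nu k) + y k - x k| <= th
         then y k.+1 = y k /\ nu k.+1 = nu k
         else normal_cone ip C (y k.+1) (nu k.+1) /\
              `|lam k.+1 *: (Flin F DF (y k) (y k.+1) + nu k.+1) + y k.+1 - x k|
                 <= sigma * `|y k.+1 - y k|) /\
        (if eta <= lam k.+1 * `|y k.+1 - x k|
         then x k.+1 = x k - (tau * lam k.+1) *: (F (y k.+1) + nu k.+1) /\
              lam k.+2 = (1 - tau) * lam k.+1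
         else x k.+1 = x k /\ lam k.+2 = lam k.+1 / (1 - tau)).

End Defs.

(* Write g(λ, x, y, ν) := λL/2 ‖λ(F y + ν) + y − x‖.  Along Algorithm 2 the invariant
   ν_k ∈ N_C(y_k), g(λ_{k+1}, x_k, y_k, ν_k) <= θ holds.  The inexact Newton step on the
   linearized inclusion turns it into g(λ_{k+1}, x_k, y_{k+1}, ν_{k+1}) <= θ̂: monotonicity of
   F' and of N_C give (1 − σ)‖y_{k+1} − y_k‖ <= ‖λ(F y_k + ν_k) + y_k − x_k‖, and the
   Lipschitz derivative bounds the linearization error by L/2 ‖y_{k+1} − y_k‖².  Both
   updates of (x, λ) then restore g <= θ, because τ solves θ̂ + τηL/2 = θ(1 − τ)².
   Finally, if λ‖y − x‖ < η, the triangle inequality turns g <= θ̂ into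
   λ²‖F y + ν‖ <= 2θ̂/L + η. *)

From HB Require Import structures.
From mathcomp Require Import all_boot all_order all_algebra.
From mathcomp Require Import all_classical all_reals all_analysis.
From mathcomp Require Import ring lra.
Import Order.TTheory GRing.Theory Num.Theory.
Import numFieldNormedType.Exports.
Local Open Scope classical_set_scope.
Local Open Scope ring_scope.
Set Implicit Arguments. Unset Strict Implicit. Unset Printing Implicit Defensive.

Section InnerProduct.
Variables (R : realType) (V : normedModType R) (ip : V -> V -> R).
Hypothesis ipP : is_inner_product ip.

Lemma ipC x y : ip x y = ip y x.
Proof. by case: ipP. Qed.

Lemma ipxx x : ip x x = `|x| ^+ 2.
Proof. by case: ipP => _ []. Qed.

Lemma ipZDl a x y z : ip (a *: x + y) z = a * ip x z + ip y z.
Proof. by case: ipP => _ []. Qed.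

Lemma ip0l z : ip 0 z = 0.
Proof.
have := ipZDl 1 0 0 z; rewrite scaler0 addr0 mul1r => h.
by apply/eqP; rewrite -(subrr (ip 0 z)) {2}h addrK.
Qed.

Lemma ipDl x y z : ip (x + y) z = ip x z + ip y z.
Proof. by rewrite -{1}[x]scale1r ipZDl mul1r. Qed.

Lemma ipZl a x z : ip (a *: x) z = a * ip x z.
Proof. by rewrite -[a *: x]addr0 ipZDl ip0l addr0. Qed.

Lemma ipNl x z : ip (- x) z = - ip x z.
Proof. by rewrite -scaleN1r ipZl mulN1r. Qed.

Lemma ipBl x y z : ip (x - y) z = ip x z - ip y z.
Proof. by rewrite ipDl ipNl. Qed.

Lemma ipZr a x z : ip z (a *: x) = a * ip z x.
Proof. by rewrite ipC ipZl ipC. Qed.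

Lemma ipBr x y z : ip z (x - y) = ip z x - ip z y.
Proof. by rewrite ipC ipBl !(ipC z). Qed.

Lemma ip_inj (u v : V) : (forall w, ip u w = ip v w) -> u = v.
Proof.
move=> uv; apply/eqP; rewrite -subr_eq0 -normr_eq0 -sqrf_eq0 -ipxx.
by rewrite ipBl uv subrr.
Qed.

Lemma ip_le_normM u v : ip u v <= `|u| * `|v|.
Proof.
have [->|u0] := eqVneq u 0; first by rewrite ip0l normr0 mul0r.
have [->|v0] := eqVneq v 0; first by rewrite ipC ip0l normr0 mulr0.
have [nu_gt0 nv_gt0] : 0 < `|u| /\ 0 < `|v| by rewrite !normr_gt0.
pose t := `|v| / `|u|.
have t_gt0 : 0 < t by rewrite divr_gt0.
have tu : t * `|u| = `|v| by rewrite /t mulfVK ?gt_eqF.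
have : 0 <= ip (t *: u - v) (t *: u - v) by rewrite ipxx sqr_ge0.
rewrite !(ipBl, ipBr, ipZl, ipZr) !ipxx (ipC v u) -tu => sq_ge0.
by rewrite -(ler_pM2l t_gt0); nra.
Qed.

Lemma normr_ip_le u v : `|ip u v| <= `|u| * `|v|.
Proof.
apply/ler_normlP; split; last exact: ip_le_normM.
by rewrite -ipNl -(normrN u) ip_le_normM.
Qed.

Lemma normal_cone_ge0 (C : set V) y y' nu' : normal_cone ip C y' nu' -> C y -> 0 <= ip nu' (y' - y).
Proof. by move=> [_ nc] Cy; have := nc y Cy; rewrite !ipBr; lra. Qed.

End InnerProduct.

(* F is differentiable only relative to C, so the mean value theorem is replaced by
   this sup argument. *)
Section LocalSlope.
Variables (R : realType) (psi : R -> R) (a b e : R).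
Hypothesis ab : a <= b.
Hypothesis slope : forall t, a <= t <= b -> exists2 d : R, 0 < d &
  forall u, a <= u <= b -> `|u - t| < d -> (u - t) * (psi u - psi t) <= e * (u - t) ^+ 2.

Let below u := psi u <= psi a + e * (u - a).

Lemma below_left_closed m :
  a <= m <= b -> (forall u, a <= u < m -> below u) -> below m.
Proof.
move=> abm below_lt; have /andP[am mb] := abm.
have [<-|ma] := eqVneq a m; first by rewrite /below subrr mulr0 addr0.
have {ma} am' : a < m by rewrite lt_neqAle ma.
have [d d_gt0 hd] := slope abm.
have [u [au um mud]] : exists u, [/\ a <= u, u < m & m - u < d].
  by have [?|?] := leP (m - d / 2) a; [exists a | exists (m - d / 2)]; split; lra.
have := hd u; rewrite au (le_trans (ltW um) mb) ltr0_norm ?subr_lt0 // opprB.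
move=> /(_ isT mud) slope_um.
have below_u := below_lt u (introT andP (conj au um)).
have mu_gt0 : 0 < m - u by rewrite subr_gt0.
have : psi m - psi u <= e * (m - u) by rewrite -(ler_pM2l mu_gt0); nra.
rewrite /below in below_u *; lra.
Qed.

Lemma below_extend m : a <= m < b -> (forall u, a <= u <= m -> below u) ->
  exists2 m', m < m' <= b & forall u, a <= u <= m' -> below u.
Proof.
move=> /andP[am mb] below_le.
have [d d_gt0 hd] := slope (introT andP (conj am (ltW mb))).
have [m' [mm' m'b m'd]] : exists m', [/\ m < m', m' <= b & m' - m < d].
  by have [?|?] := leP (m + d / 2) b; [exists (m + d / 2) | exists b]; split; lra.
exists m'; first by rewrite mm'.
move=> u /andP[au um']; have [mu|um] := ltP m u; last by rewrite below_le ?au.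
have := hd u; rewrite au (le_trans um' m'b) gtr0_norm ?subr_gt0 //.
move=> /(_ isT ltac:(lra)) slope_mu.
have below_m := below_le m (introT andP (conj am (lexx m))).
have um_gt0 : 0 < u - m by rewrite subr_gt0.
have : psi u - psi m <= e * (u - m) by rewrite -(ler_pM2l um_gt0); nra.
rewrite /below in below_m *; lra.
Qed.

Lemma below_right_end : below b.
Proof.
pose A := [set s | a <= s <= b /\ forall u, a <= u <= s -> below u].
have Aa : A a.
  split; first by rewrite lexx ab.
  move=> u /andP[au ua]; have -> : u = a by apply/eqP; rewrite eq_le ua au.
  by rewrite /below subrr mulr0 addr0.
have supA : has_sup A by split; [exists a | exists b => s [/andP[]]].
set m := sup A.
have am : a <= m by apply: sup_upper_bound.
have mb : m <= b by apply: ge_sup; [exists a | move=> s [/andP[]]].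
have below_lt u : a <= u < m -> below u.
  move=> /andP[au um]; have mu_gt0 : 0 < m - u by rewrite subr_gt0.
  have [s [_ below_s] ms] := sup_adherent mu_gt0 supA.
  by apply: below_s; rewrite au /=; rewrite -/m in ms; lra.
have below_le u : a <= u <= m -> below u.
  move=> /andP[au um]; have [um'|mu] := ltP u m; first by rewrite below_lt ?au.
  have -> : u = m by apply/eqP; rewrite eq_le um mu.
  by apply: below_left_closed; rewrite ?am.
have [mb'|bm] := ltP m b; last first.
  have -> : b = m by apply/eqP; rewrite eq_le bm mb.
  by apply: below_le; rewrite am lexx.
have [m' /andP[mm' m'b] below_m'] := below_extend (introT andP (conj am mb')) below_le.
have := sup_upper_bound supA (conj (introT andP (conj (le_trans am (ltW mm')) m'b)) below_m').
by rewrite -/m leNgt mm'.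
Qed.

End LocalSlope.

Lemma local_slope_nonpos_le (R : realType) (psi : R -> R) (a b : R) : a <= b ->
  (forall t, a <= t <= b -> forall e, 0 < e -> exists2 d : R, 0 < d &
     forall u, a <= u <= b -> `|u - t| < d -> (u - t) * (psi u - psi t) <= e * (u - t) ^+ 2) ->
  psi b <= psi a.
Proof.
move=> ab slope; apply/ler_addgt0Pr => e e_gt0.
have ba1_gt0 : 0 < b - a + 1 by lra.
have e'_gt0 : 0 < e / (b - a + 1) by rewrite divr_gt0.
have := below_right_end ab (fun t ht => slope t ht _ e'_gt0).
suff : e / (b - a + 1) * (b - a) <= e by lra.
by rewrite mulrAC ler_pdivrMr // ler_pM2l //; lra.
Qed.

Section StepSizeParameters.
Variable R : realType.
Implicit Types sigma theta eta L : R.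

Lemma theta_hatE sigma theta : sigma != 1 ->
  theta_hat sigma theta = sigma * (theta / (1 - sigma)) + (theta / (1 - sigma)) ^+ 2.
Proof. by move=> s1; rewrite /theta_hat; field; rewrite subr_eq0 eq_sym. Qed.

Lemma theta_hat_ge0 sigma theta : 0 <= sigma < 1 -> 0 <= theta -> 0 <= theta_hat sigma theta.
Proof.
move=> /andP[sigma_ge0 sigma_lt1] theta_ge0; have sigma1_gt0 : 0 < 1 - sigma by lra.
by rewrite /theta_hat mulr_ge0 ?addr_ge0 ?divr_ge0 ?sqr_ge0 // ltW.
Qed.

Lemma theta_hat_lt sigma theta : 0 <= sigma < 1 / 2 -> 0 < theta ->
  theta < (1 - sigma) * (1 - 2 * sigma) -> theta_hat sigma theta < theta.
Proof.
move=> /andP[sigma_ge0 sigma_lt] theta_gt0 theta_lt.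
have sigma1_gt0 : 0 < 1 - sigma by lra.
have -> : theta_hat sigma theta =
    theta * ((sigma * (1 - sigma) + theta) / (1 - sigma) ^+ 2).
  by rewrite /theta_hat; field; rewrite gt_eqF.
rewrite -[ltRHS]mulr1 ltr_pM2l // ltr_pdivrMr ?exprn_gt0 //; nra.
Qed.

(* tau_of is the smaller root of θτ² − (2θ + ηL/2)τ + (θ − θ̂) = 0, in rationalized form. *)
Lemma tau_ofP sigma theta eta L :
  0 < theta -> 0 <= theta_hat sigma theta < theta -> 0 < eta * L ->
  let tau := tau_of sigma theta eta L in
  [/\ 0 <= tau, tau < 1 & theta_hat sigma theta + tau * (eta * L / 2) = theta * (1 - tau) ^+ 2].
Proof.
move=> theta_gt0; rewrite /tau_of; set th := theta_hat _ _.
move=> /andP[th_ge0 th_lt] etaL_gt0; set a := 2 * theta + _; set D := Num.sqrt _.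
have a_gt : 2 * theta < a by rewrite /a; lra.
have disc_ge0 : 0 <= a ^+ 2 - 4 * theta * (theta - th) by nra.
have D_ge0 : 0 <= D by apply: sqrtr_ge0.
have D2 : D ^+ 2 = a ^+ 2 - 4 * theta * (theta - th) by rewrite sqr_sqrtr.
have aD_gt0 : 0 < a + D by lra.
set t := 2 * (theta - th) / (a + D).
have tE : t * (a + D) = 2 * (theta - th) by rewrite /t mulfVK ?gt_eqF.
split; first by rewrite /t divr_ge0 //; lra.
  by rewrite /t ltr_pdivrMr // mul1r; lra.
have tD : 2 * theta * t = a - D by apply: (mulIf (lt0r_neq0 aD_gt0)); nra.
have := congr1 (fun u => t * u) tD; rewrite /= /a in tE *; lra.
Qed.

End StepSizeParameters.

(* The quantity that the first test of Algorithm 2 compares with θ̂. *)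
Definition newton_gap (R : realType) (V : normedModType R) (F : V -> V) (L lam : R)
  (x y nu : V) : R := lam * L / 2 * `|lam *: (F y + nu) + y - x|.

Section StepSizeUpdate.
Variables (R : realType) (V : normedModType R) (F : V -> V) (L tau lam : R) (x y nu : V).

Lemma newton_gap_extragradient :
  newton_gap F L ((1 - tau) * lam) (x - (tau * lam) *: (F y + nu)) y nu =
  (1 - tau) * newton_gap F L lam x y nu.
Proof.
by rewrite /newton_gap opprB addrA [X in X - x]addrAC -scalerDl mulrBl mul1r subrK; ring.
Qed.

Lemma newton_gap_enlarge eta : 0 <= tau < 1 -> 0 < lam -> 0 <= L ->
  lam * `|y - x| <= eta ->
  newton_gap F L (lam / (1 - tau)) x y nu <=
  (newton_gap F L lam x y nu + tau * (eta * L / 2)) / (1 - tau) ^+ 2.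
Proof.
move=> /andP[tau_ge0 tau_lt1] lam_gt0 L_ge0 lam_yx; rewrite /newton_gap.
set s := (1 - tau)^-1; set v := F y + nu; set r := lam *: v + y - x.
have s_ge1 : 1 <= s by rewrite /s invf_ge1 ?subr_gt0 //; lra.
have s_tau : s * (1 - tau) = 1 by rewrite /s mulVf // subr_eq0 gt_eqF.
have -> : lam / (1 - tau) *: v + y - x = s *: r + (1 - s) *: (y - x).
  rewrite /r -!addrA [in RHS]scalerDr scalerA -addrA -scalerDl [s + _]addrC subrK scale1r.
  by rewrite [s * _]mulrC.
have nr := normr_ge0 r; have nyx := normr_ge0 (y - x).
have norm_le : `|s *: r + (1 - s) *: (y - x)| <= s * `|r| + (s - 1) * `|y - x|.
  apply: le_trans (ler_normD _ _) _.
  by rewrite !normrZ ger0_norm ?ler0_norm ?opprB //; lra.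
have lsL_ge0 : 0 <= lam * s * L / 2 by rewrite !mulr_ge0 // ?ltW //; lra.
apply: le_trans (ler_wpM2l lsL_ge0 norm_le) _.
have -> : (lam * L / 2 * `|r| + tau * (eta * L / 2)) / (1 - tau) ^+ 2 =
    s ^+ 2 * (lam * L / 2 * `|r| + tau * (eta * L / 2)) by rewrite /s exprVn mulrC.
have s1 : s - 1 = s * tau by lra.
have : s * (s * tau) * (L / 2) * (lam * `|y - x|) <= s * (s * tau) * (L / 2) * eta.
  by rewrite ler_wpM2l // !mulr_ge0 //; lra.
rewrite s1; lra.
Qed.

End StepSizeUpdate.

Lemma norm_le_of_newton_gap (R : realType) (V : normedModType R) (F : V -> V)
    (L lam g eta : R) (x y nu : V) :
  0 < L -> 0 < lam -> newton_gap F L lam x y nu <= g -> lam * `|y - x| <= eta ->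
  `|F y + nu| <= (2 * g / L + eta) / lam ^+ 2.
Proof.
rewrite /newton_gap => L_gt0 lam_gt0; set r := lam *: (F y + nu) + y - x => gap_le yx_le.
have lam_v : lam * `|F y + nu| <= `|r| + `|y - x|.
  rewrite -(gtr0_norm lam_gt0) -normrZ.
  have -> : lam *: (F y + nu) = r - (y - x) by rewrite /r -[_ + y - x]addrA addrK.
  exact: ler_normB.
have lam_r : lam * `|r| <= 2 * g / L.
  by rewrite ler_pdivlMr //; move: gap_le; rewrite -(ler_pM2r (ltr0Sn _ 1)); lra.
rewrite ler_pdivlMr ?exprn_gt0 //.
have := ler_wpM2l (ltW lam_gt0) lam_v; nra.
Qed.

Lemma div_succ_mul_le (R : realFieldType) (x r : R) : 0 <= x -> 0 <= r ->
  x / (r + 1) * r <= x.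
Proof. by move=> x_ge0 r_ge0; rewrite mulrAC ler_pdivrMr; nra. Qed.

Section MonotoneOperator.
Variables (R : realType) (V : normedModType R) (ip : V -> V -> R) (C : set V)
  (F : V -> V) (DF : V -> V -> V) (L : R).
Hypotheses (ipP : is_inner_product ip) (convC : is_convex_set C)
  (monoF : monotone_on ip C F) (linDF : bounded_linear_on C DF)
  (derF : frechet_deriv_on C F DF) (lipDF : lipschitz_deriv_on C DF L).

Lemma DF0 y : C y -> DF y 0 = 0.
Proof.
move=> Cy; have [lin _] := linDF Cy.
have := lin 1 0 0; rewrite scaler0 addr0 scale1r => h.
by apply: (addrI (DF y 0)); rewrite addr0 -h.
Qed.

Lemma DFZ y a u : C y -> DF y (a *: u) = a *: DF y u.
Proof.
move=> Cy; have [lin _] := linDF Cy.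
by rewrite -[a *: u]addr0 lin DF0 // addr0.
Qed.

Lemma convex_segment y z t : C y -> C z -> 0 <= t <= 1 -> C (y + t *: (z - y)).
Proof.
move=> Cy Cz t01; have := convC Cz Cy t01.
by rewrite scalerBl scale1r scalerBr addrCA.
Qed.

Lemma frechet_on_segment y z t : C y -> C z -> 0 <= t <= 1 ->
  forall eps, 0 < eps -> exists2 del : R, 0 < del & forall u, 0 <= u <= 1 ->
    `|u - t| < del ->
    `|F (y + u *: (z - y)) - F (y + t *: (z - y)) - (u - t) *: DF (y + t *: (z - y)) (z - y)|
      <= eps * `|u - t|.
Proof.
move=> Cy Cz t01 eps eps_gt0; set d := z - y; set pt := y + t *: d.
have nd1_gt0 : 0 < `|d| + 1 by have := normr_ge0 d; lra.
have Cpt : C pt by apply: convex_segment.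
have [del del_gt0 hdel] := derF Cpt (divr_gt0 eps_gt0 nd1_gt0).
exists (del / (`|d| + 1)) => [|u u01]; first by rewrite divr_gt0.
rewrite ltr_pdivlMr // => ut_lt.
have put : y + u *: d - pt = (u - t) *: d by rewrite opprD addrACA subrr add0r -scalerBl.
have := hdel _ (convex_segment Cy Cz u01); rewrite -/d -/pt put DFZ //.
rewrite normrZ; have nut := normr_ge0 (u - t); have nd := normr_ge0 d.
move=> /(_ ltac:(nra)) err_le; apply: le_trans err_le _.
by rewrite mulrCA [leRHS]mulrC ler_wpM2l // div_succ_mul_le // ltW.
Qed.

Lemma DF_monotone y z : C y -> C z -> 0 <= ip (DF y (z - y)) (z - y).
Proof.
move=> Cy Cz; set d := z - y; set X := ip (DF y d) d.
apply/ler_addgt0Pr => e e_gt0.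
have nd1_gt0 : 0 < `|d| + 1 by have := normr_ge0 d; lra.
have t0 : 0 <= (0 : R) <= 1 by rewrite lexx ler01.
have [del del_gt0 hdel] := frechet_on_segment Cy Cz t0 (divr_gt0 e_gt0 nd1_gt0).
have [u [u_gt0 u1 u_del]] : exists u, [/\ 0 < u, u <= 1 & u < del].
  by have [?|?] := leP 1 (del / 2); [exists 1 | exists (del / 2)]; split; lra.
have u01 : 0 <= u <= 1 by rewrite ltW.
have := hdel u u01; rewrite !subr0 gtr0_norm // scale0r addr0 -/d => /(_ u_del).
set err := _ - u *: DF y d => err_le.
have Fu : F (y + u *: d) - F y = u *: DF y d + err by rewrite /err [RHS]addrC subrK.
have := monoF (convex_segment Cy Cz u01) Cy.
have pu_y : y + u *: d - y = u *: d by rewrite addrC addKr.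
rewrite -/d pu_y Fu (ipDl ipP) !(ipZl ipP) !(ipZr ipP) -/X => mono.
have E_le : ip err d <= e * u.
  apply: le_trans (ip_le_normM ipP _ _) _.
  apply: le_trans (ler_wpM2r (normr_ge0 d) err_le) _.
  by rewrite mulrAC ler_wpM2r ?(ltW u_gt0) // div_succ_mul_le // ltW.
have uE := ler_wpM2l (ltW u_gt0) E_le.
have : 0 <= u * (u * (X + e)) by rewrite !mulrDr; lra.
by rewrite !pmulr_rge0.
Qed.

Hypothesis L_ge0 : 0 <= L.

Section SegmentPotential.
Variables (y z w : V).
Hypotheses (Cy : C y) (Cz : C z).

Let d := z - y.
Let c := L * `|d| ^+ 2 * `|w|.
(* psi 1 <= psi 0 is the Taylor estimate ‖F z − F_y(z)‖ <= L/2 ‖z − y‖²,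
   tested against w. *)
Let psi t := ip (F (y + t *: d)) w - t * ip (DF y d) w - c / 2 * t ^+ 2.

Lemma DF_segment_ip_le t : 0 <= t <= 1 ->
  ip (DF (y + t *: d) d) w - ip (DF y d) w <= c * t.
Proof.
move=> t01; have /andP[t_ge0 _] := t01.
rewrite -(ipBl ipP); apply: le_trans (ip_le_normM ipP _ _) _.
have := lipDF (convex_segment Cy Cz t01) Cy d.
have -> : y + t *: d - y = t *: d by rewrite addrC addKr.
rewrite normrZ ger0_norm // => lip.
apply: le_trans (ler_wpM2r (normr_ge0 w) lip) _.
by rewrite /c; lra.
Qed.

Lemma psi_local_slope t : 0 <= t <= 1 -> forall e, 0 < e -> exists2 del : R, 0 < del &
  forall u, 0 <= u <= 1 -> `|u - t| < del -> (u - t) * (psi u - psi t) <= e * (u - t) ^+ 2.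
Proof.
move=> t01 e e_gt0.
have c_ge0 : 0 <= c by rewrite /c !mulr_ge0.
have nw1_gt0 : 0 < `|w| + 1 by have := normr_ge0 w; lra.
have c1_gt0 : 0 < c + 1 by lra.
pose eps := e / (2 * (`|w| + 1)).
have eps_gt0 : 0 < eps by rewrite divr_gt0 // mulr_gt0.
have [del del_gt0 hdel] := frechet_on_segment Cy Cz t01 eps_gt0.
exists (Num.min del (e / (c + 1))) => [|u u01]; first by rewrite lt_min del_gt0 divr_gt0.
rewrite lt_min => /andP[ut_del ut_c].
have := hdel u u01 ut_del; rewrite -/d.
set pt := y + t *: d; set s := u - t; set err := _ - s *: _ => err_le.
set A := ip (DF pt d) w; set B := ip (DF y d) w; set E := ip err w.
have FuE : ip (F (y + u *: d)) w = ip (F pt) w + s * A + E.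
  have Fu : F (y + u *: d) - F pt = s *: DF pt d + err by rewrite /err [RHS]addrC subrK.
  by have := congr1 (ip^~ w) Fu; rewrite /= (ipBl ipP) (ipDl ipP) (ipZl ipP) -/A -/E; lra.
have -> : psi u - psi t = s * A + E - s * B - c / 2 * (s * (s + 2 * t)).
  by rewrite /psi FuE -/pt -/B /s; ring.
have ns := normr_ge0 s.
have s2 : `|s| ^+ 2 = s ^+ 2 by rewrite real_normK ?num_real.
have AB : s ^+ 2 * (A - B) <= s ^+ 2 * (c * t).
  by rewrite ler_wpM2l ?sqr_ge0 // DF_segment_ip_le.
have sE : s * E <= s ^+ 2 * (e / 2).
  apply: le_trans (ler_norm _) _; rewrite normrM.
  apply: le_trans (ler_wpM2l ns (normr_ip_le ipP err w)) _.
  apply: le_trans (ler_wpM2l ns (ler_wpM2r (normr_ge0 w) err_le)) _.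
  have eps_w : eps * `|w| <= e / 2.
    by rewrite /eps mulrAC ler_pdivrMr ?mulr_gt0 //; nra.
  rewrite -s2; nra.
have cs : - (c / 2 * s ^+ 3) <= s ^+ 2 * (e / 2).
  have cs_le : c * `|s| <= e.
    by move: ut_c; rewrite ltr_pdivlMr // => ?; nra.
  have cNs : c * - s <= e.
    by apply: le_trans cs_le; rewrite ler_wpM2l // -normrN ler_norm.
  have := ler_wpM2l (sqr_ge0 s) cNs; lra.
nra.
Qed.

Lemma ip_linearization_error_le : ip (F z - Flin F DF y z) w <= c / 2.
Proof.
have psi10 : psi 1 <= psi 0.
  by apply: local_slope_nonpos_le; [exact: ler01 | exact: psi_local_slope].
move: psi10; rewrite /psi scale1r scale0r addr0 expr1n expr0n /= !mulr0 !mul1r !mul0r !subr0.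
have -> : y + d = z by rewrite /d addrC subrK.
by rewrite /Flin -/d (ipBl ipP) (ipDl ipP) mulr1; lra.
Qed.

End SegmentPotential.

Lemma linearization_error_le y z : C y -> C z ->
  `|F z - Flin F DF y z| <= L / 2 * `|z - y| ^+ 2.
Proof.
move=> Cy Cz; set w := F z - Flin F DF y z.
have := ip_linearization_error_le w Cy Cz; rewrite -/w (ipxx ipP).
have [->|w_neq0] := eqVneq w 0; first by rewrite normr0 mulr_ge0 ?sqr_ge0 ?divr_ge0.
have nw_gt0 : 0 < `|w| by rewrite normr_gt0.
by move=> h; rewrite -(ler_pM2l nw_gt0); nra.
Qed.

Section InexactNewtonStep.
Variables (lam sigma : R) (x y nu y' nu' : V).
Hypotheses (lam_gt0 : 0 < lam) (ncy : normal_cone ip C y nu) (ncy' : normal_cone ip C y' nu').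
Hypothesis inexact : `|lam *: (Flin F DF y y' + nu') + y' - x| <= sigma * `|y' - y|.

Lemma inexact_newton_step_dist : (1 - sigma) * `|y' - y| <= `|lam *: (F y + nu) + y - x|.
Proof.
have [[Cy _] [Cy' _]] := (ncy, ncy'); have res_le := inexact.
set d := y' - y in res_le *; set r := lam *: _ + y' - x in res_le.
set r0 := lam *: (F y + nu) + y - x.
have dd : `|d| ^+ 2 <= ip r d - ip r0 d.
  have DFdd : 0 <= ip (DF y d) d := DF_monotone Cy Cy'.
  have nu'd : 0 <= ip nu' d := normal_cone_ge0 ipP ncy' Cy.
  have nud : ip nu d <= 0 by have [_ /(_ y' Cy')] := ncy.
  have : ip r d - ip r0 d = lam * ip (DF y d) d + lam * (ip nu' d - ip nu d) + ip d d.
    by rewrite /r /r0 /Flin -/d !(ipBl ipP, ipDl ipP, ipZl ipP); ring.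
  rewrite (ipxx ipP) => ->; have lam_ge0 := ltW lam_gt0.
  by rewrite -lerBlDr subrr addr_ge0 ?mulr_ge0 // subr_ge0 (le_trans nud).
have nd := normr_ge0 d.
have [->|d_neq0] := eqVneq d 0; first by rewrite normr0 mulr0.
have nd_gt0 : 0 < `|d| by rewrite normr_gt0.
rewrite -(ler_pM2l nd_gt0).
have := ip_le_normM ipP r d; have /ler_normlP[r0d _] := normr_ip_le ipP r0 d.
have := ler_wpM2r nd res_le; nra.
Qed.

Lemma inexact_newton_step_residual :
  `|lam *: (F y' + nu') + y' - x| <= sigma * `|y' - y| + lam * (L / 2 * `|y' - y| ^+ 2).
Proof.
have [[Cy _] [Cy' _]] := (ncy, ncy').
have -> : lam *: (F y' + nu') + y' - x =
    (lam *: (Flin F DF y y' + nu') + y' - x) + lam *: (F y' - Flin F DF y y').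
  by apply: (ip_inj ipP) => w; rewrite /Flin !(ipBl ipP, ipDl ipP, ipNl ipP, ipZl ipP); ring.
apply: le_trans (ler_normD _ _) _; rewrite normrZ gtr0_norm //.
by rewrite lerD // ler_wpM2l ?(ltW lam_gt0) // linearization_error_le.
Qed.

Lemma newton_gap_inexact_step theta : 0 <= sigma < 1 ->
  newton_gap F L lam x y nu <= theta -> newton_gap F L lam x y' nu' <= theta_hat sigma theta.
Proof.
move=> /andP[sigma_ge0 sigma_lt1] gap_le; rewrite /newton_gap in gap_le *.
have lL_ge0 : 0 <= lam * L / 2 by rewrite !mulr_ge0 // ltW.
pose q := lam * L / 2 * `|y' - y|.
have q_ge0 : 0 <= q by rewrite mulr_ge0.
have q_le : q <= theta / (1 - sigma).
  rewrite ler_pdivlMr ?subr_gt0 //; apply: le_trans gap_le.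
  have -> : q * (1 - sigma) = lam * L / 2 * ((1 - sigma) * `|y' - y|) by rewrite /q; ring.
  by rewrite ler_wpM2l // inexact_newton_step_dist.
apply: le_trans (ler_wpM2l lL_ge0 inexact_newton_step_residual) _.
rewrite theta_hatE ?lt_eqF //.
have -> : lam * L / 2 * (sigma * `|y' - y| + lam * (L / 2 * `|y' - y| ^+ 2)) =
  sigma * q + q ^+ 2 by rewrite /q; ring.
by rewrite lerD ?ler_wpM2l // ler_sqr // nnegrE (le_trans q_ge0).
Qed.

End InexactNewtonStep.

End MonotoneOperator.

Section Algorithm2.
Variables (R : realType) (V : normedModType R) (ip : V -> V -> R) (C : set V)
  (F : V -> V) (DF : V -> V -> V) (L sigma theta eta : R)
  (x y nu : nat -> V) (lam : nat -> R).
Hypotheses (ipP : is_inner_product ip) (convC : is_convex_set C)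
  (monoF : monotone_on ip C F) (linDF : bounded_linear_on C DF)
  (derF : frechet_deriv_on C F DF) (lipDF : lipschitz_deriv_on C DF L) (L_gt0 : 0 < L)
  (sigma_ge0 : 0 <= sigma) (sigma_lt : sigma < 1 / 2)
  (theta_gt0 : 0 < theta) (theta_lt : theta < (1 - sigma) * (1 - 2 * sigma))
  (eta_gt : 2 * theta_hat sigma theta / L < eta)
  (alg : algorithm2 ip C F DF L sigma theta eta x y nu lam).

Let sigma01 : 0 <= sigma < 1.
Proof. by rewrite sigma_ge0 (lt_le_trans sigma_lt) // ler_pdivrMr //; lra. Qed.

Let theta_hat_bounds : 0 <= theta_hat sigma theta < theta.
Proof.
rewrite theta_hat_ge0 ?(ltW theta_gt0) //=.
by apply: theta_hat_lt; rewrite ?sigma_ge0.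
Qed.

Let eta_gt0 : 0 < eta.
Proof.
case/andP: theta_hat_bounds => th_ge0 _.
by apply: le_lt_trans eta_gt; rewrite divr_ge0 ?(ltW L_gt0) // mulr_ge0 // ler0n.
Qed.

Lemma algorithm2_inner_step n : normal_cone ip C (y n) (nu n) -> 0 < lam n.+1 ->
  newton_gap F L (lam n.+1) (x n) (y n) (nu n) <= theta ->
  normal_cone ip C (y n.+1) (nu n.+1) /\
  newton_gap F L (lam n.+1) (x n) (y n.+1) (nu n.+1) <= theta_hat sigma theta.
Proof.
move=> ncn lam_gt0 gap_le; have [_ [_ [_ [_ [_ [_ /(_ n) [+ _]]]]]]] := alg.
case: ifP => [_ [-> ->] // | _ [ncn' inexact]]; split => //.
exact: (newton_gap_inexact_step ipP convC monoF linDF derF lipDF (ltW L_gt0)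
  lam_gt0 ncn ncn' inexact sigma01 gap_le).
Qed.

Lemma algorithm2_outer_step n : 0 < lam n.+1 ->
  newton_gap F L (lam n.+1) (x n) (y n.+1) (nu n.+1) <= theta_hat sigma theta ->
  0 < lam n.+2 /\ newton_gap F L (lam n.+2) (x n.+1) (y n.+1) (nu n.+1) <= theta.
Proof.
move=> lam_gt0 gap_le; have /andP[th_ge0 th_lt] := theta_hat_bounds.
have [tau_ge0 tau_lt1 tauE] := tau_ofP theta_gt0 theta_hat_bounds (mulr_gt0 eta_gt0 L_gt0).
have [_ [_ [_ [_ [_ [_ /(_ n) [_ outer]]]]]]] := alg.
move: outer; case: ifP => [_ [-> ->] | /negbT yx_lt [-> ->]].
  split; first by rewrite mulr_gt0 // subr_gt0.
  rewrite newton_gap_extragradient; apply: le_trans (ltW th_lt).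
  apply: le_trans (ler_wpM2l _ gap_le) _; first by rewrite subr_ge0 ltW.
  by rewrite ler_piMl // gerBl.
split; first by rewrite divr_gt0 // subr_gt0.
have yx_le : lam n.+1 * `|y n.+1 - x n| <= eta by rewrite ltW // ltNge.
have tau01 : 0 <= tau_of sigma theta eta L < 1 by rewrite tau_ge0.
apply: le_trans (newton_gap_enlarge _ _ tau01 lam_gt0 (ltW L_gt0) yx_le) _.
by rewrite ler_pdivrMr ?exprn_gt0 ?subr_gt0 // -tauE lerD2r.
Qed.

Lemma algorithm2_invariant n :
  [/\ normal_cone ip C (y n) (nu n), 0 < lam n.+1 &
      newton_gap F L (lam n.+1) (x n) (y n) (nu n) <= theta].
Proof.
elim: n => [|n [ncn lam_gt0 gap_le]].
  have [Cx0 [-> [-> [lam1_gt0 [lam1F _]]]]] := alg.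
  split => //; first by split => // z _; rewrite (ip0l ipP).
  rewrite /newton_gap addr0 addrK normrZ gtr0_norm //.
  by move: lam1F; rewrite ler_pdivlMr //; lra.
have [ncn' gap_le'] := algorithm2_inner_step ncn lam_gt0 gap_le.
have [lam_gt0' gap_le''] := algorithm2_outer_step lam_gt0 gap_le'.
by split.
Qed.

Lemma algorithm2_bound k : lam k.+1 * `|y k.+1 - x k| < eta ->
  normal_cone ip C (y k.+1) (nu k.+1) /\
  `|F (y k.+1) + nu k.+1| <= (2 * theta_hat sigma theta / L + eta) / lam k.+1 ^+ 2.
Proof.
move=> yx_lt; have [ncy lam_gt0 gap_le] := algorithm2_invariant k.
have [ncy' gap_le'] := algorithm2_inner_step ncy lam_gt0 gap_le.
by split => //; apply: norm_le_of_newton_gap gap_le' (ltW yx_lt).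
Qed.

End Algorithm2.

Theorem proposition4p7 (R : realType) (H : completeNormedModType R)
  (ip : H -> H -> R) (C : set H) (F : H -> H) (DF : H -> H -> H)
  (L sigma theta eta : R) (x y nu : nat -> H) (lam : nat -> R) :
  is_inner_product ip ->
  C !=set0 -> closed C -> is_convex_set C ->
  monotone_on ip C F ->
  bounded_linear_on C DF -> frechet_deriv_on C F DF ->
  0 < L -> lipschitz_deriv_on C DF L ->
  (exists2 xs, C xs & exists2 v, normal_cone ip C xs v & F xs + v = 0) ->
  0 <= sigma -> sigma < 1 / 2 ->
  0 < theta -> theta < (1 - sigma) * (1 - 2 * sigma) ->
  2 * theta_hat sigma theta / L < eta ->
  algorithm2 ip C F DF L sigma theta eta x y nu lam ->
  forall k : nat, lam k.+1 * `|y k.+1 - x k| < eta ->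
    normal_cone ip C (y k.+1) (nu k.+1) /\
    `|F (y k.+1) + nu k.+1| <= (2 * theta_hat sigma theta / L + eta) / lam k.+1 ^+ 2.
Proof.
move=> ipP _ _ convC monoF linDF derF L_gt0 lipDF _.
exact: (algorithm2_bound ipP convC monoF linDF derF lipDF L_gt0).
Qed.
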